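(* Let $0<\alpha_\mathcal{A}<1$, $0\le\epsilon<1$, and suppose every non-adversarial pool has share $\alpha_i<0.4302$. Consider the Markov chain on the fork states $(0,0),(1,0),(2,0),(1,1)$ describing the selfish mining strategy $\pi^{\mathrm{selfish}}$, where each step is the mining of one new block, with the following transitions and accounting (adversarial canonical blocks $A$, bribe units paid $C$, total blocks added to the canonical chain $B$): (i) from $(0,0)$: with probability $\alpha_\mathcal{A}$ go to $(1,0)$ ($A=C=B=0$); with probability $1-\alpha_\mathcal{A}$ stay at $(0,0)$ ($A=C=0$, $B=1$); (ii) from $(1,0)$: with probability $\alpha_\mathcal{A}$ go to $(2,0)$; with probability $1-\alpha_\mathcal{A}$ go to $(1,1)$ (in both cases $A=C=B=0$); (iii) from $(2,0)$: with probability $\alpha_\mathcal{A}$ stay at $(2,0)$ ($A=1$, $C=0$, $B=1$); with probability $1-\alpha_\mathcal{A}$ go to $(0,0)$ ($A=2$, $C=0$, $B=2$); (iv) from $(1,1)$, always going to $(0,0)$ with $B=2$: with probability $\alpha_\mathcal{A}$, $A=2$, $C=0$; with probability $1-\alpha_\mathcal{A}-\beta_\mathcal{A}$, $A=1$, $C=\epsilon$; with probability $\beta_\mathcal{A}$, $A=0$, $C=0$. Let $\mathbb{E}_\pi$ denote expectation of the one-step quantities under the stationary distribution $\pi$ of this chain, and define the time-averaged profit after difficulty adjustment as $\mathrm{Profit}(\pi^{\mathrm{selfish}})=\lambda R\,\frac{\mathbb{E}_\pi[A]-\mathbb{E}_\pi[C]}{\mathbb{E}_\pi[B]}$, where $\lambda>0$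 is the block rate of the canonical chain. Then $\mathrm{Profit}(\pi^{\mathrm{selfish}})>\alpha_\mathcal{A}\lambda R$ (the honest-mining profit) if (and in fact iff) $$\beta_\mathcal{A}<\frac{\alpha_\mathcal{A}-\epsilon(1-\alpha_\mathcal{A})^2}{(1-\alpha_\mathcal{A})(1-\epsilon)}.$$
   Context: Model: there is an adversarial mining pool $p_\mathcal{A}$ with mining-power share $\alpha_\mathcal{A}$ and non-adversarial (petty-compliant) pools $p_1,\dots,p_N$ with shares $\alpha_1,\dots,\alpha_N>0$, $\alpha_\mathcal{A}+\sum_i\alpha_i=1$; each new block is found by each pool with probability equal to its share. Block reward is a fixed $R>0$; a normalized bribe $\mathrm{br}$ means a payment of $\mathrm{br}\cdot R$; $\epsilon$ is the incentivizing factor of the environment. The residual centralization factor of the adversary is $\beta_\mathcal{A}=\frac{\sum_{i=1}^N\alpha_i^2}{1-\alpha_\mathcal{A}}$. The state $(l_\mathcal{A},l_\mathcal{R})$ records the lengths of the hidden adversarial fork and the public non-adversarial fork. In state $(1,1)$ the adversary has published its block with a normalized bribe $\epsilon$ on top; the pool that mined the competing block keeps mining on its own block and all other pools mine on the adversarial block; the bribe is paid only if a non-adversarial pool extends the adversarial block. The share bound $0.4302$ is the paper's condition guaranteeing that a pool whose one-block fork falls one block behind adopts the longer fork. *)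

From mathcomp Require Import all_boot all_order all_algebra.
Set Implicit Arguments. Unset Strict Implicit. Unset Printing Implicit Defensive.
Import Order.TTheory GRing.Theory Num.Theory.
Local Open Scope ring_scope.

Inductive fstate := S00 | S10 | S20 | S11.

Definition fstates : seq fstate := [:: S00; S10; S20; S11].

Definition fstate_eqb (s t : fstate) : bool :=
  match s, t with
  | S00, S00 | S10, S10 | S20, S20 | S11, S11 => true
  | _, _ => false
  end.

(* One possible outcome of a step: probability, next state, and the
   one-step quantities A (adversarial canonical blocks), C (bribe units
   paid, in units of R), B (blocks added to the canonical chain). *)
Record outcome (R : Type) := Out {
  o_prob : R; o_next : fstate; o_A : R; o_C : R; o_B : R }.

Section Selfish.
Variable R : realFieldType.

Definition selfish_steps (aA beta eps : R) (s : fstate) : seq (outcome R) :=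
  match s with
  | S00 => [:: Out aA S10 0 0 0; Out (1 - aA) S00 0 0 1]
  | S10 => [:: Out aA S20 0 0 0; Out (1 - aA) S11 0 0 0]
  | S20 => [:: Out aA S20 1 0 1; Out (1 - aA) S00 2 0 2]
  | S11 => [:: Out aA S00 2 0 2; Out (1 - aA - beta) S00 1 eps 2;
              Out beta S00 0 0 2]
  end.

Definition trans (aA beta eps : R) (s t : fstate) : R :=
  \sum_(o <- selfish_steps aA beta eps s)
     (if fstate_eqb (o_next o) t then o_prob o else 0).

Definition stationary (aA beta eps : R) (pi : fstate -> R) : Prop :=
  (forall s, 0 <= pi s) /\ \sum_(s <- fstates) pi s = 1 /\
  (forall t, pi t = \sum_(s <- fstates) pi s * trans aA beta eps s t).

Definition Epi (aA beta eps : R) (pi : fstate -> R) (f : outcome R -> R) : R :=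
  \sum_(s <- fstates) pi s *
    \sum_(o <- selfish_steps aA beta eps s) o_prob o * f o.

Definition profit_selfish (aA beta eps lambda Rw : R) (pi : fstate -> R) : R :=
  lambda * Rw *
  ((Epi aA beta eps pi (@o_A R) - Epi aA beta eps pi (@o_C R))
    / Epi aA beta eps pi (@o_B R)).

Definition beta_res (N : nat) (alpha : 'I_N -> R) (aA : R) : R :=
  (\sum_(i < N) alpha i ^+ 2) / (1 - aA).

End Selfish.

(* The chain returns to (0,0) every time the adversary's lead is resolved, so
   its stationary law is pi(1,0) = a pi(0,0), pi(1,1) = a (1 - a) pi(0,0) and
   pi(2,0) = a^2 / (1 - a) pi(0,0), with pi(0,0) > 0.  Substituting it into the
   expected rewards, the excess E[A] - E[C] - a E[B] of selfish over honest
   mining factors as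
   pi(0,0) a (a - eps (1 - a)^2 - beta (1 - a) (1 - eps)),
   whose sign is that of the difference in the claimed bound on beta. *)
From mathcomp Require Import all_boot all_order all_algebra ring lra.
Import Order.TTheory GRing.Theory Num.Theory.
Local Open Scope ring_scope.

Lemma ltr_pM_scaled_ratio (R : realFieldType) (k a x y : R) :
  0 < k -> 0 < y -> (a * k < k * (x / y)) = (a * y < x).
Proof.
move=> k_gt0 y_gt0.
by rewrite [a * k]mulrC ltr_pM2l // ltr_pdivlMr.
Qed.

Section SelfishChain.
Variables (R : realFieldType) (aA beta eps : R).
Hypotheses (aA_gt0 : 0 < aA) (aA_lt1 : aA < 1).

Lemma stationary_selfish_law (pi : fstate -> R) :
  stationary aA beta eps pi ->
  [/\ pi S10 = aA * pi S00, pi S11 = (1 - aA) * aA * pi S00,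
      pi S20 = aA ^+ 2 * pi S00 / (1 - aA) & 0 < pi S00].
Proof.
move=> [pi_ge0 [pi_sum1 balance]].
move: (balance S10) (balance S20) (balance S11) pi_sum1.
rewrite /trans /fstates /= !big_cons !big_nil /=.
move=> bal10 bal20 bal11 sum1.
have aA'_neq0 : 1 - aA != 0 by rewrite subr_eq0 gt_eqF.
have pi10 : pi S10 = aA * pi S00 by lra.
have pi11 : pi S11 = (1 - aA) * aA * pi S00 by nra.
have pi20 : pi S20 = aA ^+ 2 * pi S00 / (1 - aA).
  by apply: (mulIf aA'_neq0); rewrite mulfVK //; nra.
split=> //; rewrite lt0r pi_ge0 andbT.
apply/eqP=> pi00_eq0; move: sum1.
by rewrite pi10 pi11 pi20 pi00_eq0 !(mul0r, mulr0, add0r, addr0) => /esym/eqP;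
  rewrite oner_eq0.
Qed.

Lemma Epi_selfish_B (pi : fstate -> R) :
  Epi aA beta eps pi (@o_B R) =
  pi S00 * (1 - aA) + pi S20 * (2 - aA) + 2 * pi S11.
Proof. by rewrite /Epi /fstates /= !big_cons !big_nil /=; ring. Qed.

Lemma Epi_selfish_A_sub_C (pi : fstate -> R) :
  Epi aA beta eps pi (@o_A R) - Epi aA beta eps pi (@o_C R) =
  pi S20 * (2 - aA) + pi S11 * (1 + aA - beta - eps * (1 - aA - beta)).
Proof. by rewrite /Epi /fstates /= !big_cons !big_nil /=; ring. Qed.

Lemma Epi_selfish_B_gt0 (pi : fstate -> R) :
  stationary aA beta eps pi -> 0 < Epi aA beta eps pi (@o_B R).
Proof.
move=> st; have [_ _ _ pi00_gt0] := stationary_selfish_law pi st.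
have [pi_ge0 _] := st.
have : 0 < pi S00 * (1 - aA) by rewrite mulr_gt0 // subr_gt0.
have : 0 <= pi S20 * (2 - aA) by rewrite mulr_ge0 ?pi_ge0 //; move: aA_lt1; lra.
have := pi_ge0 S11; rewrite Epi_selfish_B; lra.
Qed.

Lemma selfish_excess (pi : fstate -> R) :
  stationary aA beta eps pi ->
  Epi aA beta eps pi (@o_A R) - Epi aA beta eps pi (@o_C R)
    - aA * Epi aA beta eps pi (@o_B R)
  = pi S00 * aA
    * (aA - eps * (1 - aA) ^+ 2 - beta * ((1 - aA) * (1 - eps))).
Proof.
move=> st; have [pi10 pi11 pi20 _] := stationary_selfish_law pi st.
rewrite Epi_selfish_A_sub_C Epi_selfish_B pi11 pi20.
by field; rewrite subr_eq0 gt_eqF.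
Qed.

Lemma selfish_beats_honestE (pi : fstate -> R) :
  eps < 1 -> stationary aA beta eps pi ->
  (aA * Epi aA beta eps pi (@o_B R)
     < Epi aA beta eps pi (@o_A R) - Epi aA beta eps pi (@o_C R))
  = (beta < (aA - eps * (1 - aA) ^+ 2) / ((1 - aA) * (1 - eps))).
Proof.
move=> eps_lt1 st; have [_ _ _ pi00_gt0] := stationary_selfish_law pi st.
have den_gt0 : 0 < (1 - aA) * (1 - eps) by rewrite mulr_gt0 ?subr_gt0.
rewrite -subr_gt0 selfish_excess // pmulr_rgt0 ?mulr_gt0 //.
by rewrite ltr_pdivlMr // subr_gt0.
Qed.

End SelfishChain.

Theorem theorem1 (R : realFieldType) (N : nat) (alpha : 'I_N -> R)
  (aA eps lambda Rw : R) (pi : fstate -> R) :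
  0 < aA -> aA < 1 -> 0 <= eps -> eps < 1 ->
  (forall i, 0 < alpha i) -> aA + \sum_(i < N) alpha i = 1 ->
  (forall i, alpha i < 4302%:R / 10000%:R) ->
  0 < lambda -> 0 < Rw ->
  stationary aA (beta_res alpha aA) eps pi ->
  (aA * lambda * Rw < profit_selfish aA (beta_res alpha aA) eps lambda Rw pi
   <-> beta_res alpha aA
       < (aA - eps * (1 - aA) ^+ 2) / ((1 - aA) * (1 - eps))).
Proof.
move=> aA_gt0 aA_lt1 _ eps_lt1 _ _ _ lambda_gt0 Rw_gt0 st.
rewrite /profit_selfish -mulrA ltr_pM_scaled_ratio ?mulr_gt0 //;
  last exact: Epi_selfish_B_gt0 st.
by rewrite selfish_beats_honestE.
Qed.
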